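(* Let $\circ$ be one of the binary operations $\cup,\cap,-$ on languages, and for sets of languages $\mathcal{R}_1,\mathcal{R}_2$ over $\Sigma$ define the Cartesian operation $\mathcal{R}_1\otimes\mathcal{R}_2=\{L_1\circ L_2\mid L_1\in\mathcal{R}_1,\ L_2\in\mathcal{R}_2\}$. (1) In general $\mathcal{R}_1\otimes\mathcal{R}_2$ is not a rational set of regular languages: there exist rational sets of regular languages $\mathcal{R}_1,\mathcal{R}_2$ for which it is not. (2) If $\mathcal{R}_1$ and $\mathcal{R}_2$ are finite rational sets of regular languages, then $\mathcal{R}_1\otimes\mathcal{R}_2$ is a rational set of regular languages. (3) In the latter case a new language substitution is in general required: there exist an alphabet $\Delta$, a regular language substitution $\varphi:\Delta\to2^{\Sigma^*}$ and regular $K_1,K_2\subseteq\Delta^+$ with $\mathcal{R}_i=(K_i,\varphi)$ finite such that there is no regular $K'\subseteq\Delta^+$ with $\mathcal{R}_1\otimes\mathcal{R}_2=(K',\varphi)$.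
   Context: Alphabets are nonempty finite sets. A regular language substitution $\varphi:\Delta\to2^{\Sigma^*}$ maps each symbol to a regular language over $\Sigma$, extended by $\varphi(\delta w)=\varphi(\delta)\varphi(w)$. A set $\mathcal{R}$ of regular languages over $\Sigma$ is a rational set of regular languages, written $\mathcal{R}=(K,\varphi)$, if there are an alphabet $\Delta$, a regular $K\subseteq\Delta^+$ and a regular language substitution $\varphi$ with $\mathcal{R}=\{\varphi(w)\mid w\in K\}$. *)

From Stdlib Require Import List.
From mathcomp Require Import all_boot.
Set Implicit Arguments. Unset Strict Implicit. Unset Printing Implicit Defensive.

Definition lang (A : finType) := seq A -> Prop.

Definition regular (A : finType) (L : lang A) : Prop :=
  exists (Q : finType) (q0 : Q) (F : pred Q) (d : Q -> A -> Q),
    forall w, L w <-> F (foldl d q0 w).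

Definition conc (A : finType) (L1 L2 : lang A) : lang A :=
  fun x => exists u v, x = u ++ v /\ L1 u /\ L2 v.

Definition eps_lang (A : finType) : lang A := fun x => x = [::].

Definition subst (D S : finType) (phi : D -> lang S) (w : seq D) : lang S :=
  foldr (fun d L => conc (phi d) L) (@eps_lang S) w.

Definition regular_subst (D S : finType) (phi : D -> lang S) : Prop :=
  forall d, regular (phi d).

Definition nonempty_words (D : finType) (K : lang D) : Prop :=
  forall w, K w -> w <> [::].

Definition rset (D S : finType) (K : lang D) (phi : D -> lang S) : lang S -> Prop :=
  fun L => exists w, K w /\ L = subst phi w.

Definition same_set (S : finType) (R1 R2 : lang S -> Prop) : Prop :=
  forall L, R1 L <-> R2 L.

Definition rational_set (S : finType) (R : lang S -> Prop) : Prop :=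
  exists (D : finType) (K : lang D) (phi : D -> lang S),
    0 < #|D| /\ regular K /\ nonempty_words K /\ regular_subst phi /\
    same_set R (rset K phi).

Definition finite_set (S : finType) (R : lang S -> Prop) : Prop :=
  exists s : seq (lang S), forall L, R L <-> Stdlib.Lists.List.In L s.

Inductive lang_op := OpUnion | OpInter | OpDiff.

Definition apply_op (S : finType) (o : lang_op) (L1 L2 : lang S) : lang S :=
  match o with
  | OpUnion => fun x => L1 x \/ L2 x
  | OpInter => fun x => L1 x /\ L2 x
  | OpDiff => fun x => L1 x /\ ~ L2 x
  end.

Definition cart (S : finType) (o : lang_op) (R1 R2 : lang S -> Prop) : lang S -> Prop :=
  fun L => exists L1 L2, R1 L1 /\ R2 L2 /\ L = apply_op o L1 L2.

(* (1) A language {x, y}, with x and y nonempty words over disjoint sets of letters, is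
   prime for concatenation: if A B = {x, y} then A or B is already {x, y}.  So whenever
   phi(w) = {x, y}, also phi(d) = {x, y} for a letter d of w, and a finite alphabet yields
   only finitely many such languages.  Yet {a^n} x {b^n} under union, and {Sigma^n} x
   {a^* + b^*} under intersection (difference with the complement), contain every
   {a^n, b^n}.
   (2) A finite set of regular languages is rational: use one letter per language.
   (3) For the identity substitution every phi(w) is the singleton {w}, while {a} o {b}
   (or {a} - {a}) is not a singleton. *)

From mathcomp Require Import all_boot.
From Stdlib Require List.
From Stdlib Require Import FunctionalExtensionality PropExtensionality IndefiniteDescription.

Set Implicit Arguments. Unset Strict Implicit. Unset Printing Implicit Defensive.

Lemma lang_ext (S : finType) (A B : lang S) : (forall z, A z <-> B z) -> A = B.
Proof.
by move=> AB; apply: functional_extensionality => z; apply: propositional_extensionality.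
Qed.

Definition letters (S : finType) (p : pred S) : lang S :=
  fun z => exists2 c, p c & z = [:: c].

Definition pair_lang (S : finType) (x y : seq S) : lang S := fun z => z = x \/ z = y.

Lemma subst1 (D S : finType) (phi : D -> lang S) d : subst phi [:: d] = phi d.
Proof.
apply: lang_ext => z; split; last by exists z, [::]; rewrite cats0.
by case=> u [v [-> [phi_u ->]]]; rewrite cats0.
Qed.

Lemma subst_const_letters (D S : finType) (p : pred S) (w : seq D) z :
  subst (fun _ => letters p) w z <-> size z = size w /\ all p z.
Proof.
elim: w z => [|d w IHw] [|c z] /=; rewrite /eps_lang //.
- by split=> // -[].
- by split=> [[u [v [uv [[c _ uE] _]]]] | []] //; rewrite uE in uv.
split=> [[u [v [zE [[c' pc uE] /IHw [sv pv]]]]] | [[sz] /andP [pc pz]]].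
  by move: zE; rewrite uE => -[-> ->]; rewrite sv pc pv.
by exists [:: c], z; split=> //; split; [exists c | apply/IHw].
Qed.

Lemma subst_pred1_letters (S : finType) (w : seq S) :
  subst (fun c => letters (pred1 c)) w = (fun z => z = w).
Proof.
elim: w => [|c w IHw] //=; apply: lang_ext => z; rewrite IHw.
split=> [[u [v [-> [[c' /eqP -> ->] ->]]]] // | ->].
by exists [:: c], w; split=> //; split=> //; exists c; rewrite /= ?eqxx.
Qed.

Lemma rset_letter (D S : finType) (phi : D -> lang S) d L :
  rset (letters (pred1 d)) phi L <-> L = phi d.
Proof.
split=> [[w [[c /eqP -> ->] ->]] | ->]; first exact: subst1.
by exists [:: d]; rewrite subst1; split=> //; exists d; rewrite /= ?eqxx.
Qed.

Section Regular.
Variable S : finType.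
Implicit Types (L : lang S) (p : pred S).

Lemma regular_eps : regular (@eps_lang S).
Proof.
exists bool, true, id, (fun _ _ => false) => -[|c z] //=.
have -> : foldl (fun _ _ => false) false z = false by elim: z.
by split.
Qed.

Lemma regular_letters p : regular (letters p).
Proof.
pose d (q : option bool) (c : S) := if q is None then Some (p c) else Some false.
have dead z : foldl d (Some false) z = Some false by elim: z.
exists (option bool), None, (pred1 (Some true)), d.
case=> [|c [|c' z]] /=; rewrite ?dead.
- by split=> // -[].
- by split=> [[c' pc' [->]] | /eqP [pc]]; [rewrite pc' | exists c].
- by split=> // -[].
Qed.

Lemma regular_all p : regular (fun z => all p z).
Proof.
exists bool, true, id, (fun q c => q && p c) => z /=.
suff run b : foldl (fun q c => q && p c) b z = b && all p z by rewrite run.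
by elim: z b => [|c z IHz] b /=; rewrite ?andbT // IHz andbA.
Qed.

Lemma regular_compl L : regular L -> regular (fun z => ~ L z).
Proof.
move=> [Q [q0 [F [d accL]]]]; exists Q, q0, (predC F), d => z /=.
by rewrite accL; split=> [/negP | /negP].
Qed.

Lemma regular_apply_op o L1 L2 : regular L1 -> regular L2 -> regular (apply_op o L1 L2).
Proof.
move=> [Q1 [q1 [F1 [d1 acc1]]]] [Q2 [q2 [F2 [d2 acc2]]]].
pose d (s : Q1 * Q2) c := (d1 s.1 c, d2 s.2 c).
have run z s : foldl d s z = (foldl d1 s.1 z, foldl d2 s.2 z).
  by elim: z s => [|c z IHz] [s1 s2] //=; rewrite IHz.
exists (Q1 * Q2)%type, (q1, q2), (fun s => match o with
  | OpUnion => F1 s.1 || F2 s.2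
  | OpInter => F1 s.1 && F2 s.2
  | OpDiff => F1 s.1 && ~~ F2 s.2 end), d => z.
rewrite run; case: o => /=; rewrite acc1 acc2.
- by split=> [[]|/orP]; [move=> ->; rewrite ?orbT ..|].
- by split=> [[-> ->] | /andP].
- by split=> [[-> /negP ->] | /andP [-> /negP]].
Qed.

(* The subset construction: a run of the automaton for [conc L1 L2] records the state
   of the first automaton together with every state the second one can be in after a
   split point accepted by the first. *)
Section ConcAutomaton.
Variables (Q1 Q2 : finType) (q1 : Q1) (F1 : pred Q1) (d1 : Q1 -> S -> Q1).
Variables (q2 : Q2) (d2 : Q2 -> S -> Q2).

Definition conc_mark (q : Q1) (X : {set Q2}) := if F1 q then q2 |: X else X.

Definition conc_step (s : Q1 * {set Q2}) (c : S) :=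
  (d1 s.1 c, conc_mark (d1 s.1 c) [set d2 r c | r in s.2]).

Definition conc_start := (q1, conc_mark q1 set0).

Lemma in_conc_mark q X r : (r \in conc_mark q X) = (F1 q && (r == q2)) || (r \in X).
Proof. by rewrite /conc_mark; case: (F1 q); rewrite ?in_setU1. Qed.

Lemma conc_run_fst z : (foldl conc_step conc_start z).1 = foldl d1 q1 z.
Proof. by elim/last_ind: z => [|z c IHz] //; rewrite !foldl_rcons /= IHz. Qed.

Lemma conc_run_snd z r : r \in (foldl conc_step conc_start z).2 <->
  exists u v, z = u ++ v /\ F1 (foldl d1 q1 u) /\ r = foldl d2 q2 v.
Proof.
elim/last_ind: z r => [|z c IHz] r.
  rewrite in_conc_mark in_set0 orbF.
  split=> [/andP [F1q /eqP ->] | [u [v [uv [F1u ->]]]]]; first by exists [::], [::].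
  by case: u v uv F1u => [|//] [|//] _ /= ->; rewrite eqxx.
rewrite foldl_rcons /= conc_run_fst -foldl_rcons in_conc_mark; split.
  case/orP=> [/andP [F1z /eqP ->] | /imsetP [r' /IHz [u [v [-> [F1u ->]]]] ->]].
    by exists (rcons z c), [::]; rewrite cats0.
  by exists u, (rcons v c); rewrite rcons_cat foldl_rcons.
case=> u [v]; case/lastP: v => [|v c'] [zE [F1u ->]].
  by rewrite zE cats0 F1u eqxx.
move: zE; rewrite -rcons_cat => /rcons_inj [zE <-]; apply/orP; right.
by rewrite foldl_rcons; apply/imsetP; exists (foldl d2 q2 v) => //; apply/IHz; exists u, v.
Qed.

End ConcAutomaton.

Lemma regular_conc L1 L2 : regular L1 -> regular L2 -> regular (conc L1 L2).
Proof.
move=> [Q1 [q1 [F1 [d1 acc1]]]] [Q2 [q2 [F2 [d2 acc2]]]].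
exists (Q1 * {set Q2})%type, (conc_start q1 F1 q2).
exists (fun s : Q1 * {set Q2} => [exists r in s.2, F2 r]), (conc_step F1 d1 q2 d2) => z.
split.
  case=> u [v [zE [L1u L2v]]]; apply/existsP; exists (foldl d2 q2 v).
  apply/andP; split; last exact/acc2.
  by apply/conc_run_snd; exists u, v; split=> //; split=> //; apply/acc1.
case/existsP=> r /andP [/conc_run_snd [u [v [-> [F1u ->]]]] F2r].
by exists u, v; split=> //; split; [apply/acc1 | apply/acc2].
Qed.

End Regular.

Lemma regular_subst_word (D S : finType) (phi : D -> lang S) w :
  regular_subst phi -> regular (subst phi w).
Proof. by move=> phi_reg; elim: w => [|d w IHw] /=; [exact: regular_eps | exact: regular_conc]. Qed.

Section ConcPrime.
Variable S : finType.
Implicit Types (A B L : lang S) (x y : seq S).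

Definition conc_prime L := L <> @eps_lang S /\ forall A B, conc A B = L -> A = L \/ B = L.

Lemma subst_conc_prime (D : finType) (phi : D -> lang S) w L :
  conc_prime L -> subst phi w = L -> exists d, phi d = L.
Proof.
move=> [L_eps L_prime]; elim: w => [|d w IHw] /= phi_w; first by case: L_eps.
by case: (L_prime _ _ phi_w) => [<-|]; [exists d | exact: IHw].
Qed.

Section DisjointPair.
Variables x y : seq S.
Hypotheses (x_ne : x != [::]) (y_ne : y != [::]) (xy : [disjoint x & y]).

Lemma sub_disjoint_pair t : {subset t <= x} -> {subset t <= y} -> t = [::].
Proof.
case: t => // c t tx ty.
by have := disjointFr xy (tx c (mem_head c t)); rewrite ty ?mem_head.
Qed.

Lemma pair_lang_sub s t :
  pair_lang x y s -> pair_lang x y t -> {subset t <= s} -> t = s.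
Proof.
move=> [|] -> [|] -> // ts.
  by move: y_ne; rewrite (sub_disjoint_pair ts (fun _ => id)).
by move: x_ne; rewrite (sub_disjoint_pair (fun _ => id) ts).
Qed.

Lemma conc_pair_lang_nil_l A B : conc A B = pair_lang x y -> A [::] -> B = pair_lang x y.
Proof.
move=> AB A_nil; apply: lang_ext => z; split=> [Bz | xyz].
  by rewrite -AB; exists [::], z.
have [u [v [zE [_ Bv]]]] : conc A B z by rewrite AB.
have xyv : pair_lang x y v by rewrite -AB; exists [::], v.
rewrite zE in xyz *; rewrite -(pair_lang_sub xyz xyv) // => c cv.
by rewrite mem_cat cv orbT.
Qed.

Lemma conc_pair_lang_nil_r A B : conc A B = pair_lang x y -> B [::] -> A = pair_lang x y.
Proof.
move=> AB B_nil; apply: lang_ext => z; split=> [Az | xyz].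
  by rewrite -AB; exists z, [::]; rewrite cats0.
have [u [v [zE [Au _]]]] : conc A B z by rewrite AB.
have xyu : pair_lang x y u by rewrite -AB; exists u, [::]; rewrite cats0.
rewrite zE in xyz *; rewrite -(pair_lang_sub xyz xyu) // => c cu.
by rewrite mem_cat cu.
Qed.

Lemma disjoint_pair_conc_prime : conc_prime (pair_lang x y).
Proof.
split=> [xy_eps | A B AB].
  have : pair_lang x y x by left.
  by rewrite xy_eps; apply/eqP.
have [u1 [v1 [xE [Au1 Bv1]]]] : conc A B x by rewrite AB; left.
have [u2 [v2 [yE [Au2 Bv2]]]] : conc A B y by rewrite AB; right.
have xy_conc u v : A u -> B v -> u ++ v = x \/ u ++ v = y.
  by move=> Au Bv; rewrite -[_ \/ _]/(pair_lang x y (u ++ v)) -AB; exists u, v.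
have [u1_nil | u1_ne] := eqVneq u1 [::].
  by right; apply: (conc_pair_lang_nil_l AB); rewrite -u1_nil.
have [v1_nil | v1_ne] := eqVneq v1 [::].
  by left; apply: (conc_pair_lang_nil_r AB); rewrite -v1_nil.
(* Otherwise u1 v2 and u2 v1 can only be x, so y = u2 v2 uses only letters of x. *)
exfalso; have [u1v2_x | u1v2_y] := xy_conc _ _ Au1 Bv2; last first.
  move/eqP: u1_ne; apply; apply: sub_disjoint_pair => c cu.
    by rewrite xE mem_cat cu.
  by rewrite -u1v2_y mem_cat cu.
have [u2v1_x | u2v1_y] := xy_conc _ _ Au2 Bv1; last first.
  move/eqP: v1_ne; apply; apply: sub_disjoint_pair => c cv.
    by rewrite xE mem_cat cv orbT.
  by rewrite -u2v1_y mem_cat cv orbT.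
move/eqP: y_ne; apply; apply: sub_disjoint_pair => // c.
rewrite yE mem_cat => /orP [cu | cv].
  by rewrite -u2v1_x mem_cat cu.
by rewrite -u1v2_x mem_cat cv orbT.
Qed.

End DisjointPair.
End ConcPrime.

Lemma rational_set_regular (S : finType) (R : lang S -> Prop) L :
  rational_set R -> R L -> regular L.
Proof.
by move=> [D [K [phi [_ [_ [_ [phi_reg eqR]]]]]]] /eqR [w [_ ->]]; exact: regular_subst_word.
Qed.

(* Each [F n] is [phi d] for a single letter [d], so [phi] would take infinitely many
   values on a finite alphabet. *)
Lemma not_rational_inj_conc_primes (S : finType) (R : lang S -> Prop) (F : nat -> lang S) :
  injective F -> (forall n, conc_prime (F n)) -> (forall n, R (F n)) -> ~ rational_set R.
Proof.
move=> injF F_prime RF [D [K [phi [_ [_ [_ [_ eqR]]]]]]].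
have letterF (i : 'I_#|D|.+1) : exists d, phi d = F i.
  by have [w [_ Fw]] := (eqR _).1 (RF i); exact: subst_conc_prime (F_prime i) (esym Fw).
have [f phi_f] := functional_choice _ letterF.
have injf : injective f by move=> i j fij; apply/val_inj/injF; rewrite -!phi_f fij.
by have := leq_card f injf; rewrite card_ord ltnn.
Qed.

Definition pow_pair n : lang bool := pair_lang (nseq n.+1 true) (nseq n.+1 false).

Lemma pow_pair_conc_prime n : conc_prime (pow_pair n).
Proof.
apply: disjoint_pair_conc_prime => //; rewrite disjoint_has; apply/hasPn => c.
by rewrite !mem_nseq => /eqP ->.
Qed.

Lemma pow_pair_inj : injective pow_pair.
Proof.
move=> i j pow_ij; have : pow_pair j (nseq i.+1 true) by rewrite -pow_ij; left.
by case=> [/(congr1 size)|[]] //; rewrite !size_nseq => -[].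
Qed.

Lemma nseq_size_all (S : finType) (c : S) n z :
  z = nseq n c <-> size z = n /\ all (pred1 c) z.
Proof.
split=> [-> | [<- /all_pred1P //]].
by rewrite size_nseq all_pred1_nseq.
Qed.

Definition positive_powers (S : finType) (L : lang S) : lang S -> Prop :=
  rset (fun w : seq unit => w <> [::]) (fun _ => L).

Lemma rational_positive_powers (S : finType) (L : lang S) :
  regular L -> rational_set (positive_powers L).
Proof.
move=> L_reg; exists unit, (fun w : seq unit => w <> [::]), (fun _ => L).
rewrite card_unit; split=> //; split; first exact: regular_compl (regular_eps _).
by split=> [// | ]; split.
Qed.

Lemma positive_powers_letters (S : finType) (p : pred S) n :
  positive_powers (letters p) (fun z => size z = n.+1 /\ all p z).
Proof.
exists (nseq n.+1 tt); split=> //; apply: lang_ext => z.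
by rewrite subst_const_letters size_nseq.
Qed.

Lemma In_nth (T : Type) (x0 : T) (s : seq T) a :
  List.In a s <-> exists2 i, i < size s & nth x0 s i = a.
Proof.
elim: s => [|b s IHs] /=; first by split=> // -[].
split=> [[<- | /IHs [i lt_is <-]] | [[|i] //= lt_is sa]].
- by exists 0.
- by exists i.+1.
- by left.
- by right; apply/IHs; exists i.
Qed.

(* One letter per language; the spare letter [size s] keeps the alphabet nonempty. *)
Lemma finite_rational_set (S : finType) (R : lang S -> Prop) :
  finite_set R -> (forall L, R L -> regular L) -> rational_set R.
Proof.
move=> [s eqR] R_reg; pose phi (i : 'I_(size s).+1) := nth (@eps_lang S) s i.
exists 'I_(size s).+1, (letters (fun i : 'I_(size s).+1 => i < size s)), phi.
rewrite card_ord; split=> //; split; first exact: regular_letters.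
split; first by move=> _ [i _ ->].
split=> [i | L].
  have [lt_is | ge_is] := ltnP i (size s).
    by apply/R_reg/eqR/(In_nth (@eps_lang S)); exists i.
  by rewrite /phi nth_default //; exact: regular_eps.
rewrite eqR (In_nth (@eps_lang S)); split=> [[i lt_is <-] | [w [[i lt_is ->] ->]]].
  pose j : 'I_(size s).+1 := Ordinal (leqW lt_is).
  by exists [:: j]; rewrite subst1; split=> //; exists j.
by rewrite subst1; exists i.
Qed.

Lemma finite_set_cart (S : finType) o (R1 R2 : lang S -> Prop) :
  finite_set R1 -> finite_set R2 -> finite_set (cart o R1 R2).
Proof.
move=> [s1 eqR1] [s2 eqR2].
exists (List.flat_map (fun L1 => List.map (apply_op o L1) s2) s1) => L.
rewrite List.in_flat_map.
split=> [[L1 [L2 [R1L1 [R2L2 ->]]]] | [L1 [s1L1 /List.in_map_iff [L2 [<- s2L2]]]]].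
  exists L1; split; first exact/eqR1.
  by apply/List.in_map_iff; exists L2; split=> //; apply/eqR2.
by exists L1, L2; split; [apply/eqR1 | split; [apply/eqR2|]].
Qed.

Lemma finite_set1 (S : finType) (L : lang S) : finite_set (fun L' => L' = L).
Proof. by exists [:: L] => L'; split=> [-> | [<- | []]]; [left |]. Qed.

Lemma rational_set1 (S : finType) (L : lang S) :
  regular L -> rational_set (fun L' => L' = L).
Proof. by move=> L_reg; apply: finite_rational_set (finite_set1 L) _ => _ ->. Qed.

Definition constant_words : lang bool :=
  apply_op OpUnion (fun z => all (pred1 true) z) (fun z => all (pred1 false) z).

Lemma regular_constant_words : regular constant_words.
Proof. by apply: regular_apply_op; exact: regular_all. Qed.

Lemma constant_words_of_size n z : (size z = n.+1 /\ constant_words z) <-> pow_pair n z.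
Proof.
rewrite /pow_pair /pair_lang !nseq_size_all.
split=> [[sz [all_t | all_f]] | [[sz all_t] | [sz all_f]]].
- by left.
- by right.
- by split=> //; left.
- by split=> //; right.
Qed.

Lemma cart_pow_pairs o : exists R1 R2 : lang bool -> Prop,
  rational_set R1 /\ rational_set R2 /\ forall n, cart o R1 R2 (pow_pair n).
Proof.
case: o.
- exists (positive_powers (letters (pred1 true))), (positive_powers (letters (pred1 false))).
  split; first exact/rational_positive_powers/regular_letters.
  split; first exact/rational_positive_powers/regular_letters.
  move=> n; do 2!eexists; split; first exact: positive_powers_letters.
  split; first exact: positive_powers_letters.
  by apply: lang_ext => z; rewrite /pow_pair /pair_lang !nseq_size_all.
- exists (positive_powers (letters predT)), (fun L => L = constant_words).
  split; first exact/rational_positive_powers/regular_letters.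
  split; first exact/rational_set1/regular_constant_words.
  move=> n; do 2!eexists; split; first exact: positive_powers_letters.
  split=> //; apply: lang_ext => z; rewrite -constant_words_of_size /= all_predT.
  by split=> [[sz cst] | [[sz _] cst]].
- exists (positive_powers (letters predT)), (fun L => L = fun z => ~ constant_words z).
  split; first exact/rational_positive_powers/regular_letters.
  split; first exact/rational_set1/regular_compl/regular_constant_words.
  move=> n; do 2!eexists; split; first exact: positive_powers_letters.
  split=> //; apply: lang_ext => z; rewrite -constant_words_of_size /= all_predT.
  split=> [[sz cst] | [[sz _] not_ncst]]; first by split.
  split=> //; rewrite /constant_words /= in not_ncst *.
  case: (all (pred1 true) z) not_ncst; first by left.
  case: (all (pred1 false) z) => [_ | ncst]; first by right.
  by case: ncst => -[].
Qed.

Lemma op_singletons_not_singleton o : exists c1 c2 : bool,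
  forall w, apply_op o (fun z => z = [:: c1]) (fun z => z = [:: c2]) <> (fun z => z = w).
Proof.
case: o; [exists true, false | exists true, false | exists true, true] => w opw.
- have t : [:: true] = w by have /= <- := equal_f opw [:: true]; left.
  have f : [:: false] = w by have /= <- := equal_f opw [:: false]; right.
  by rewrite -f in t.
- have /= opw_w := equal_f opw w.
  by have [->] : w = [:: true] /\ w = [:: false] by rewrite opw_w.
- have /= opw_w := equal_f opw w.
  by have [] : w = [:: true] /\ w <> [:: true] by rewrite opw_w.
Qed.

Lemma cart_letters_not_rset (o : lang_op) :
  exists (S D : finType) (phi : D -> lang S) (K1 K2 : lang D),
  0 < #|S| /\ 0 < #|D| /\ regular_subst phi /\
  regular K1 /\ nonempty_words K1 /\ regular K2 /\ nonempty_words K2 /\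
  finite_set (rset K1 phi) /\ finite_set (rset K2 phi) /\
  ~ (exists K' : lang D, regular K' /\ nonempty_words K' /\
       same_set (cart o (rset K1 phi) (rset K2 phi)) (rset K' phi)).
Proof.
have [c1 [c2 not_single]] := op_singletons_not_singleton o.
pose phi (c : bool) := letters (pred1 c).
have phi_single c : phi c = (fun z => z = [:: c]) by rewrite -subst_pred1_letters subst1.
have letter_set c : finite_set (rset (letters (pred1 c)) phi).
  by have [s eq_s] := finite_set1 (phi c); exists s => L; rewrite rset_letter.
exists bool, bool, phi, (letters (pred1 c1)), (letters (pred1 c2)).
rewrite card_bool; do 2!split=> //; split; first by move=> c; exact: regular_letters.
do 2!(split; first exact: regular_letters; split; first by move=> _ [c _ ->]).
do 2!(split; first exact: letter_set).
move=> [K' [_ [_ eqK']]].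
have [|w [_ phi_w]] := (eqK' (apply_op o (phi c1) (phi c2))).1.
  by exists (phi c1), (phi c2); rewrite !rset_letter.
by apply: (not_single w); rewrite -!phi_single phi_w subst_pred1_letters.
Qed.

Theorem corollary2 (o : lang_op) :
  (* (1) *)
  (exists (S : finType) (R1 R2 : lang S -> Prop),
      0 < #|S| /\ rational_set R1 /\ rational_set R2 /\
      ~ rational_set (cart o R1 R2)) /\
  (* (2) *)
  (forall (S : finType) (R1 R2 : lang S -> Prop),
      0 < #|S| -> rational_set R1 -> rational_set R2 ->
      finite_set R1 -> finite_set R2 -> rational_set (cart o R1 R2)) /\
  (* (3) *)
  (exists (S D : finType) (phi : D -> lang S) (K1 K2 : lang D),
      0 < #|S| /\ 0 < #|D| /\ regular_subst phi /\
      regular K1 /\ nonempty_words K1 /\ regular K2 /\ nonempty_words K2 /\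
      finite_set (rset K1 phi) /\ finite_set (rset K2 phi) /\
      ~ (exists K' : lang D, regular K' /\ nonempty_words K' /\
           same_set (cart o (rset K1 phi) (rset K2 phi)) (rset K' phi))).
Proof.
split; last split; last exact: cart_letters_not_rset.
- have [R1 [R2 [rat_R1 [rat_R2 cart_pairs]]]] := cart_pow_pairs o.
  exists bool, R1, R2; rewrite card_bool; do 3!split=> //.
  exact: not_rational_inj_conc_primes pow_pair_inj pow_pair_conc_prime cart_pairs.
- move=> S R1 R2 _ rat_R1 rat_R2 fin_R1 fin_R2.
  apply: finite_rational_set (finite_set_cart o fin_R1 fin_R2) _ => _ [L1 [L2 [R1L1 [R2L2 ->]]]].
  by apply: regular_apply_op; [exact: rational_set_regular R1L1 | exact: rational_set_regular R2L2].
Qed.
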